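(* Under the hypotheses and notation of the previous statement (real-valued $w$, $\lim_{x\to\pm\infty}w=\mp k_0$, $k_0>0$, transfer matrix $M(k)$ defined through the Jost solutions of $-\psi''+(-w^2-iw'+k_0^2)\psi=k^2\psi$), assume moreover that $M_{11}$ and $M_{22}$ are differentiable at $k=k_0$. Then $$M_{11}(k_0)=2k_0\,\overline{M_{22}'(k_0)}.$$ Consequently the spectral singularity at $k_0$ (where $M_{22}(k_0)=0$ always) is self-dual, i.e. $M_{11}(k_0)=0$, if and only if $M_{22}'(k_0)=0$, i.e. iff $k_0$ is a zero of $M_{22}$ of order at least two.
   Context: The transfer matrix $M(k)$ relates left Jost solutions ($\phi_1^L\sim e^{ikx}$, $\phi_2^L\sim e^{-ikx}$ at $-\infty$) and right Jost solutions ($\phi_1^R\sim e^{ikx}$, $\phi_2^R\sim e^{-ikx}$ at $+\infty$) via $\phi_1^L=M_{11}\phi_1^R+M_{21}\phi_2^R$, $\phi_2^L=M_{12}\phi_1^R+M_{22}\phi_2^R$. Overline denotes complex conjugation, prime denotes derivative in $k$. *)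

From Stdlib Require Import Reals.
Open Scope R_scope.

Definition Cplx : Type := (R * R)%type.
Definition Cre (z : Cplx) : R := fst z.
Definition Cim (z : Cplx) : R := snd z.
Definition C0 : Cplx := (0, 0).
Definition RtoC (r : R) : Cplx := (r, 0).
Definition Cadd (z u : Cplx) : Cplx := (Cre z + Cre u, Cim z + Cim u).
Definition Copp (z : Cplx) : Cplx := (- Cre z, - Cim z).
Definition Cmul (z u : Cplx) : Cplx :=
  (Cre z * Cre u - Cim z * Cim u, Cre z * Cim u + Cim z * Cre u).
Definition Cconj (z : Cplx) : Cplx := (Cre z, - Cim z).
Definition Cnorm (z : Cplx) : R := sqrt (Cre z ^ 2 + Cim z ^ 2).
Definition Cexpi (t : R) : Cplx := (cos t, sin t).

Definition Cderiv_lim (f : R -> Cplx) (x : R) (l : Cplx) : Prop :=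
  derivable_pt_lim (fun t => Cre (f t)) x (Cre l) /\
  derivable_pt_lim (fun t => Cim (f t)) x (Cim l).

Definition lim_minus_infty (f : R -> R) (l : R) : Prop :=
  forall eps, 0 < eps -> exists A, forall x, x < A -> Rabs (f x - l) < eps.
Definition lim_plus_infty (f : R -> R) (l : R) : Prop :=
  forall eps, 0 < eps -> exists A, forall x, A < x -> Rabs (f x - l) < eps.
Definition Clim_minus_infty (f : R -> Cplx) (l : Cplx) : Prop :=
  forall eps, 0 < eps -> exists A, forall x, x < A -> Cnorm (Cadd (f x) (Copp l)) < eps.
Definition Clim_plus_infty (f : R -> Cplx) (l : Cplx) : Prop :=
  forall eps, 0 < eps -> exists A, forall x, A < x -> Cnorm (Cadd (f x) (Copp l)) < eps.

(** * The potential  V = -w^2 - i w' + k0^2  (dw is the derivative w') *)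
Definition potV (w dw : R -> R) (k0 : R) (x : R) : Cplx :=
  (- (w x) ^ 2 + k0 ^ 2, - dw x).

Definition solves_schrodinger (V : R -> Cplx) (k : R) (psi : R -> Cplx) : Prop :=
  exists dpsi ddpsi : R -> Cplx,
    forall x, Cderiv_lim psi x (dpsi x) /\ Cderiv_lim dpsi x (ddpsi x) /\
      Cadd (Copp (ddpsi x)) (Cmul (V x) (psi x)) = Cmul (RtoC (k ^ 2)) (psi x).

Definition jost_left1 V k (phi : R -> Cplx) : Prop :=
  solves_schrodinger V k phi /\
  Clim_minus_infty (fun x => Cadd (phi x) (Copp (Cexpi (k * x)))) C0.
Definition jost_left2 V k (phi : R -> Cplx) : Prop :=
  solves_schrodinger V k phi /\
  Clim_minus_infty (fun x => Cadd (phi x) (Copp (Cexpi (- k * x)))) C0.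
Definition jost_right1 V k (phi : R -> Cplx) : Prop :=
  solves_schrodinger V k phi /\
  Clim_plus_infty (fun x => Cadd (phi x) (Copp (Cexpi (k * x)))) C0.
Definition jost_right2 V k (phi : R -> Cplx) : Prop :=
  solves_schrodinger V k phi /\
  Clim_plus_infty (fun x => Cadd (phi x) (Copp (Cexpi (- k * x)))) C0.

(** Short-range condition  \int_R (1+|x|) |V(x)| dx < infinity, expressed as:
    the (continuous, nonnegative) integrand has a bounded primitive. *)
Definition short_range (V : R -> Cplx) : Prop :=
  exists G : R -> R,
    (forall x, derivable_pt_lim G x ((1 + Rabs x) * Cnorm (V x))) /\
    exists B, forall x, Rabs (G x) <= B.

Definition transfer_matrix_at (V : R -> Cplx) (k : R)
  (phi1L phi2L phi1R phi2R : R -> R -> Cplx)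
  (M11 M12 M21 M22 : R -> Cplx) : Prop :=
  jost_left1 V k (phi1L k) /\ jost_left2 V k (phi2L k) /\
  jost_right1 V k (phi1R k) /\ jost_right2 V k (phi2R k) /\
  (forall x, phi1L k x = Cadd (Cmul (M11 k) (phi1R k x)) (Cmul (M21 k) (phi2R k x))) /\
  (forall x, phi2L k x = Cadd (Cmul (M12 k) (phi1R k x)) (Cmul (M22 k) (phi2R k x))).

(* For real [w] the map [T f := conj (f' + i w f)] sends solutions of [-f'' + V f = k^2 f] to
   solutions.  Where [w -> om] it turns the asymptotics [e^{i ka x}] into [-i (ka + om) e^{-i ka x}].
   Computing the Wronskian of [phi1R] with [T phi1L] once from the right (through
   [phi1L = M11 phi1R + M21 phi2R]) and once from the left (where [T phi1L] is a multiple of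
   [phi2L]) gives [(k + k0) M22(k) = (k - k0) conj (M11(k))] for all [k <> 0].  Differentiating at
   [k0] yields [M22(k0) = 0] and [M22'(k0) = conj (M11(k0)) / (2 k0)].
   The analytic input is that the Jost asymptotics [f ~ e^{i ka x}] of a short-range potential may
   be differentiated: the Wronskian of [f] with the free wave [e^{i ka x}] has derivative
   [e^{i ka x} V f], which is integrable, so it converges, and its limit must be 0. *)

From Stdlib Require Import Reals Lra Psatz Nsatz Classical.
From Coquelicot Require Complex.
Open Scope R_scope.

Ltac Cunfold := unfold Cadd, Cmul, Copp, Cconj, RtoC, Cre, Cim, C0, Cexpi in *; simpl in *.
Ltac Cring := Cunfold; apply injective_projections; simpl; ring.
Ltac Cfield := Cunfold; apply injective_projections; simpl; field.

Lemma Cnorm_triangle z u : Cnorm (Cadd z u) <= Cnorm z + Cnorm u.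
Proof. exact (Complex.Cmod_triangle z u). Qed.

Lemma Cnorm_mult z u : Cnorm (Cmul z u) = Cnorm z * Cnorm u.
Proof. exact (Complex.Cmod_mult z u). Qed.

Lemma Cnorm_pos z : 0 <= Cnorm z.
Proof. exact (Complex.Cmod_ge_0 z). Qed.

Lemma Cnorm_conj z : Cnorm (Cconj z) = Cnorm z.
Proof. exact (Complex.Cmod_conj z). Qed.

Lemma Cnorm_opp z : Cnorm (Copp z) = Cnorm z.
Proof. exact (Complex.Cmod_opp z). Qed.

Lemma Cnorm_RtoC r : Cnorm (RtoC r) = Rabs r.
Proof. exact (Complex.Cmod_R r). Qed.

Lemma Cnorm_eq0 z : Cnorm z = 0 -> z = C0.
Proof. exact (Complex.Cmod_eq_0 z). Qed.

Lemma Cnorm_expi t : Cnorm (Cexpi t) = 1.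
Proof.
  unfold Cnorm, Cexpi, Cre, Cim; simpl.
  replace (cos t * (cos t * 1) + sin t * (sin t * 1)) with 1; [apply sqrt_1|].
  pose proof (sin2_cos2 t); unfold Rsqr in *; lra.
Qed.

Lemma Rabs_Cre_le z : Rabs (Cre z) <= Cnorm z.
Proof. exact (Rle_trans _ _ _ (Rmax_l _ _) (Complex.Rmax_Cmod z)). Qed.

Lemma Rabs_Cim_le z : Rabs (Cim z) <= Cnorm z.
Proof. exact (Rle_trans _ _ _ (Rmax_r _ _) (Complex.Rmax_Cmod z)). Qed.

Lemma Cnorm_le_Rabs z : Cnorm z <= Rabs (Cre z) + Rabs (Cim z).
Proof.
  destruct z as [a b]; unfold Cnorm, Cre, Cim; simpl.
  pose proof (Rabs_pos a); pose proof (Rabs_pos b).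
  apply Rsqr_incr_0_var; [| lra].
  rewrite Rsqr_sqrt by nra; unfold Rsqr.
  replace (a * (a * 1) + b * (b * 1)) with (Rabs a * Rabs a + Rabs b * Rabs b)
    by (rewrite <- !Rabs_mult, !Rabs_right by nra; ring).
  nra.
Qed.

Lemma Cnorm_le_sub z u : Cnorm z <= Cnorm (Cadd z (Copp u)) + Cnorm u.
Proof. replace z with (Cadd (Cadd z (Copp u)) u) at 1 by Cring. apply Cnorm_triangle. Qed.

Lemma Cmul_reg_l z u v : z <> C0 -> Cmul z u = Cmul z v -> u = v.
Proof.
  destruct z as [a b], u as [u1 u2], v as [v1 v2]; intros Hz E.
  assert (Hab : a * a + b * b <> 0)
    by (intro H; apply Hz; unfold C0; f_equal; nra).
  Cunfold; injection E; intros E2 E1.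
  f_equal; apply (Rmult_eq_reg_l (a * a + b * b)); try nsatz; auto.
Qed.

Lemma Cexpi_add a b : Cexpi (a + b) = Cmul (Cexpi a) (Cexpi b).
Proof. Cunfold; rewrite cos_plus, sin_plus; f_equal; ring. Qed.

Lemma Cexpi_opp a : Cexpi (- a) = Cconj (Cexpi a).
Proof. Cunfold; rewrite cos_neg, sin_neg; reflexivity. Qed.

Lemma Cexpi_mul_conj a : Cmul (Cexpi a) (Cconj (Cexpi a)) = RtoC 1.
Proof. Cunfold; pose proof (sin2_cos2 a); unfold Rsqr in *; f_equal; lra. Qed.

Lemma Cexpi_add_PI a u : u * u = 1 -> Cexpi (a + PI * u) = Copp (Cexpi a).
Proof.
  intro Hu; assert (u = 1 \/ u = -1) as [-> | ->] by nra; Cunfold.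
  - rewrite Rmult_1_r, neg_cos, neg_sin; reflexivity.
  - replace (a + PI * -1) with (a + - PI) by ring.
    rewrite cos_plus, sin_plus, cos_neg, sin_neg, cos_PI, sin_PI; f_equal; ring.
Qed.

Lemma derivable_pt_lim_eq_val f x a b :
  derivable_pt_lim f x a -> a = b -> derivable_pt_lim f x b.
Proof. now intros H <-. Qed.

Lemma Cderiv_lim_eq_val f x a b : Cderiv_lim f x a -> a = b -> Cderiv_lim f x b.
Proof. now intros H <-. Qed.

Lemma Cderiv_lim_unique f x a b : Cderiv_lim f x a -> Cderiv_lim f x b -> a = b.
Proof.
  intros [H1 H2] [H3 H4]; apply injective_projections;
    eapply uniqueness_limite; eassumption.
Qed.

Lemma Cderiv_lim_locally_ext f g x a r : 0 < r ->
  (forall t, x - r < t < x + r -> f t = g t) -> Cderiv_lim f x a -> Cderiv_lim g x a.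
Proof.
  intros Hr E [H1 H2]; split.
  - apply (derivable_pt_lim_locally_ext (fun t => Cre (f t)) _ x (x - r) (x + r) _); auto; [lra|].
    intros t Ht; now rewrite E.
  - apply (derivable_pt_lim_locally_ext (fun t => Cim (f t)) _ x (x - r) (x + r) _); auto; [lra|].
    intros t Ht; now rewrite E.
Qed.

Lemma Cderiv_lim_ext f g x a : (forall t, f t = g t) -> Cderiv_lim f x a -> Cderiv_lim g x a.
Proof. intro E; apply (Cderiv_lim_locally_ext f g x a 1); auto; lra. Qed.

Lemma Cderiv_lim_const c x : Cderiv_lim (fun _ => c) x C0.
Proof. split; apply derivable_pt_lim_const. Qed.

Lemma Cderiv_lim_add f g x a b : Cderiv_lim f x a -> Cderiv_lim g x b ->
  Cderiv_lim (fun t => Cadd (f t) (g t)) x (Cadd a b).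
Proof. intros [H1 H2] [H3 H4]; split; now apply derivable_pt_lim_plus. Qed.

Lemma Cderiv_lim_opp f x a : Cderiv_lim f x a -> Cderiv_lim (fun t => Copp (f t)) x (Copp a).
Proof. intros [H1 H2]; split; now apply derivable_pt_lim_opp. Qed.

Lemma Cderiv_lim_conj f x a : Cderiv_lim f x a -> Cderiv_lim (fun t => Cconj (f t)) x (Cconj a).
Proof. intros [H1 H2]; split; [exact H1 | now apply derivable_pt_lim_opp]. Qed.

Lemma Cderiv_lim_mul f g x a b : Cderiv_lim f x a -> Cderiv_lim g x b ->
  Cderiv_lim (fun t => Cmul (f t) (g t)) x (Cadd (Cmul a (g x)) (Cmul (f x) b)).
Proof.
  intros [H1 H2] [H3 H4]; split; eapply derivable_pt_lim_eq_val.
  - apply derivable_pt_lim_minus; apply derivable_pt_lim_mult; eassumption.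
  - Cunfold; ring.
  - apply derivable_pt_lim_plus; apply derivable_pt_lim_mult; eassumption.
  - Cunfold; ring.
Qed.

Lemma Cderiv_lim_RtoC w x a :
  derivable_pt_lim w x a -> Cderiv_lim (fun t => RtoC (w t)) x (RtoC a).
Proof. intro H; split; [exact H | apply derivable_pt_lim_const]. Qed.

Lemma Cderiv_lim_imag w x a :
  derivable_pt_lim w x a -> Cderiv_lim (fun t => (0, w t)) x (0, a).
Proof. intro H; split; [apply derivable_pt_lim_const | exact H]. Qed.

Lemma Cderiv_lim_expi c x :
  Cderiv_lim (fun t => Cexpi (c * t)) x (Cmul (0, c) (Cexpi (c * x))).
Proof.
  assert (Hc : derivable_pt_lim (fun t => c * t) x c).
  { eapply derivable_pt_lim_eq_val.
    - apply derivable_pt_lim_scal, derivable_pt_lim_id.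
    - ring. }
  split; eapply derivable_pt_lim_eq_val.
  - apply (derivable_pt_lim_comp (fun t => c * t) cos); [exact Hc | apply derivable_pt_lim_cos].
  - Cunfold; ring.
  - apply (derivable_pt_lim_comp (fun t => c * t) sin); [exact Hc | apply derivable_pt_lim_sin].
  - Cunfold; ring.
Qed.

Lemma Cderiv_lim_zero_const (h : R -> Cplx) :
  (forall x, Cderiv_lim h x C0) -> forall x y, h x = h y.
Proof.
  assert (Hreal : forall g : R -> R, (forall x, derivable_pt_lim g x 0) -> forall x y, g x = g y).
  { intros g Hg.
    assert (Hlt : forall x y, x < y -> g x = g y).
    { intros x y Hxy; destruct (MVT_cor2 g (fun _ => 0) x y Hxy) as [c [Hc _]];
        [intros; apply Hg | lra]. }
    intros x y; destruct (Rtotal_order x y) as [| []]; subst; auto; symmetry; auto. }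
  intros H x y; apply injective_projections;
    [apply (Hreal (fun t => Cre (h t))) | apply (Hreal (fun t => Cim (h t)))]; intros; apply H.
Qed.

Lemma derivable_pt_lim_cayley a : a <> 0 ->
  derivable_pt_lim (fun t => (t - a) / (t + a)) a (/ (2 * a)).
Proof.
  intro Ha; eapply derivable_pt_lim_eq_val.
  - apply (derivable_pt_lim_div (fun t => t - a) (fun t => t + a)); [| | lra].
    + apply (derivable_pt_lim_minus id (fun _ => a));
        [apply derivable_pt_lim_id | apply derivable_pt_lim_const].
    + apply (derivable_pt_lim_plus id (fun _ => a));
        [apply derivable_pt_lim_id | apply derivable_pt_lim_const].
  - unfold Rsqr; field; lra.
Qed.

Lemma Cderiv_lim_vanishing_factor (r : R -> R) (F G : R -> Cplx) x rho dF del : 0 < del ->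
  (forall t, x - del < t < x + del -> G t = Cmul (RtoC (r t)) (F t)) ->
  r x = 0 -> derivable_pt_lim r x rho -> Cderiv_lim F x dF ->
  Cderiv_lim G x (Cmul (RtoC rho) (F x)).
Proof.
  intros Hdel E Hr0 Hr HF.
  apply (Cderiv_lim_locally_ext _ _ x _ del Hdel (fun t Ht => eq_sym (E t Ht))).
  eapply Cderiv_lim_eq_val; [apply Cderiv_lim_mul; [apply Cderiv_lim_RtoC, Hr | exact HF]|].
  cbv beta; rewrite Hr0; Cring.
Qed.

(* The end is encoded by a direction [d] with [d * d = 1]: [d = 1] is [+oo], [d = -1] is [-oo]. *)
Definition eventually (d : R) (P : R -> Prop) : Prop :=
  exists A, forall x, A < d * x -> P x.

Definition vanishes_at (d : R) (f : R -> Cplx) : Prop :=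
  forall eps, 0 < eps -> eventually d (fun x => Cnorm (f x) < eps).

Definition bounded_at (d : R) (f : R -> Cplx) : Prop :=
  exists B, eventually d (fun x => Cnorm (f x) <= B).

Definition Rconverges_at (d : R) (w : R -> R) (l : R) : Prop :=
  forall eps, 0 < eps -> eventually d (fun x => Rabs (w x - l) < eps).

Definition Rcauchy_at (d : R) (G : R -> R) : Prop :=
  forall eps, 0 < eps -> exists A, forall x y,
    A < d * x -> A < d * y -> Rabs (G x - G y) < eps.

Definition cauchy_at (d : R) (F : R -> Cplx) : Prop :=
  forall eps, 0 < eps -> exists A, forall x y,
    A < d * x -> A < d * y -> Cnorm (Cadd (F x) (Copp (F y))) < eps.

Lemma direction_cases d : d * d = 1 -> d = 1 \/ d = -1.
Proof. intro Hd; assert ((d - 1) * (d + 1) = 0) as [|]%Rmult_integral by nra; lra. Qed.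

Lemma eventually_and d P Q :
  eventually d P -> eventually d Q -> eventually d (fun x => P x /\ Q x).
Proof.
  intros [A HA] [B HB]; exists (Rmax A B); intros x Hx.
  split; [apply HA | apply HB]; pose proof (Rmax_l A B); pose proof (Rmax_r A B); lra.
Qed.

Lemma eventually_mono d (P Q : R -> Prop) :
  eventually d P -> (forall x, P x -> Q x) -> eventually d Q.
Proof. intros [A HA] H; exists A; auto. Qed.

Lemma eventually_witness d P : d * d = 1 -> eventually d P -> exists x, P x.
Proof.
  intros Hd [A HA]; exists (d * (A + 1)); apply HA.
  replace (d * (d * (A + 1))) with (d * d * (A + 1)) by ring; rewrite Hd; lra.
Qed.

Lemma beyond_between d A a b c :
  d * d = 1 -> A < d * a -> A < d * b -> a <= c <= b -> A < d * c.
Proof. intros Hd; destruct (direction_cases d Hd); subst; nra. Qed.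

Lemma vanishes_at_intro d f C : 0 < C ->
  (forall eps, 0 < eps -> eventually d (fun x => Cnorm (f x) <= C * eps)) -> vanishes_at d f.
Proof.
  intros HC H eps He.
  apply (eventually_mono _ _ _ (H (eps / (2 * C)) ltac:(apply Rdiv_lt_0_compat; lra))).
  intros x Hx; replace (C * (eps / (2 * C))) with (eps / 2) in Hx by (field; lra); lra.
Qed.

Lemma vanishes_at_ext d f g : (forall x, f x = g x) -> vanishes_at d f -> vanishes_at d g.
Proof.
  intros E H eps He; apply (eventually_mono _ _ _ (H eps He)); intros x; now rewrite E.
Qed.

Lemma vanishes_at_add d f g : vanishes_at d f -> vanishes_at d g ->
  vanishes_at d (fun x => Cadd (f x) (g x)).
Proof.
  intros Hf Hg; apply (vanishes_at_intro _ _ 2); [lra|]; intros eps He.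
  apply (eventually_mono _ _ _ (eventually_and _ _ _ (Hf eps He) (Hg eps He))).
  intros x [H1 H2]; pose proof (Cnorm_triangle (f x) (g x)); lra.
Qed.

Lemma vanishes_at_opp d f : vanishes_at d f -> vanishes_at d (fun x => Copp (f x)).
Proof.
  intros Hf eps He; apply (eventually_mono _ _ _ (Hf eps He)); intros x; now rewrite Cnorm_opp.
Qed.

Lemma vanishes_at_conj d f : vanishes_at d f -> vanishes_at d (fun x => Cconj (f x)).
Proof.
  intros Hf eps He; apply (eventually_mono _ _ _ (Hf eps He)); intros x; now rewrite Cnorm_conj.
Qed.

Lemma vanishes_at_mul_bounded d g f : bounded_at d g -> vanishes_at d f ->
  vanishes_at d (fun x => Cmul (g x) (f x)).
Proof.
  intros [B HB] Hf; apply (vanishes_at_intro _ _ (Rabs B + 1)); [pose proof (Rabs_pos B); lra|].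
  intros eps He; apply (eventually_mono _ _ _ (eventually_and _ _ _ HB (Hf eps He))).
  intros x [H1 H2]; rewrite Cnorm_mult.
  pose proof (Cnorm_pos (g x)); pose proof (Cnorm_pos (f x)); pose proof (Rle_abs B); nra.
Qed.

Lemma vanishes_at_const_eq0 d c : d * d = 1 -> vanishes_at d (fun _ => c) -> c = C0.
Proof.
  intros Hd H; apply Cnorm_eq0.
  destruct (Rle_lt_or_eq_dec _ _ (Cnorm_pos c)) as [Hlt|]; auto.
  destruct (eventually_witness d _ Hd (H _ Hlt)); lra.
Qed.

Lemma bounded_at_const d c : bounded_at d (fun _ => c).
Proof. exists (Cnorm c), 0; intros; lra. Qed.

Lemma bounded_at_expi d (a : R -> R) : bounded_at d (fun x => Cexpi (a x)).
Proof. exists 1, 0; intros; rewrite Cnorm_expi; lra. Qed.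

Lemma bounded_at_mul d f g : bounded_at d f -> bounded_at d g ->
  bounded_at d (fun x => Cmul (f x) (g x)).
Proof.
  intros [A HA] [B HB]; exists (A * B).
  apply (eventually_mono _ _ _ (eventually_and _ _ _ HA HB)).
  intros x [H1 H2]; rewrite Cnorm_mult.
  apply Rmult_le_compat; auto using Cnorm_pos.
Qed.

Lemma bounded_at_const_expi d c (a : R -> R) : bounded_at d (fun x => Cmul c (Cexpi (a x))).
Proof. apply bounded_at_mul; [apply bounded_at_const | apply bounded_at_expi]. Qed.

Lemma bounded_at_near d f g :
  vanishes_at d (fun x => Cadd (f x) (Copp (g x))) -> bounded_at d g -> bounded_at d f.
Proof.
  intros H [B HB]; exists (1 + B).
  apply (eventually_mono _ _ _ (eventually_and _ _ _ (H 1 Rlt_0_1) HB)).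
  intros x [H1 H2]; pose proof (Cnorm_le_sub (f x) (g x)); lra.
Qed.

Lemma vanishes_at_Rconverges d w l :
  Rconverges_at d w l -> vanishes_at d (fun x => RtoC (w x - l)).
Proof.
  intros H eps He; apply (eventually_mono _ _ _ (H eps He)); intros x; now rewrite Cnorm_RtoC.
Qed.

Lemma bounded_at_Rconverges d w l :
  Rconverges_at d w l -> bounded_at d (fun x => (0, w x)).
Proof.
  intros H; apply (bounded_at_near _ _ (fun _ => (0, l))); [|apply bounded_at_const].
  apply (vanishes_at_ext _ (fun x => Cmul (0, 1) (RtoC (w x - l)))); [intro; Cring|].
  apply vanishes_at_mul_bounded; [apply bounded_at_const | now apply vanishes_at_Rconverges].
Qed.

Lemma vanishes_at_of_Clim_plus_infty f :
  Clim_plus_infty f C0 -> vanishes_at 1 f.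
Proof.
  intros H eps He; destruct (H eps He) as [A HA]; exists A; intros x Hx.
  replace (f x) with (Cadd (f x) (Copp C0)) by Cring; apply HA; lra.
Qed.

Lemma vanishes_at_of_Clim_minus_infty f :
  Clim_minus_infty f C0 -> vanishes_at (-1) f.
Proof.
  intros H eps He; destruct (H eps He) as [A HA]; exists (- A); intros x Hx.
  replace (f x) with (Cadd (f x) (Copp C0)) by Cring; apply HA; lra.
Qed.

Lemma Rconverges_of_lim_plus_infty w l : lim_plus_infty w l -> Rconverges_at 1 w l.
Proof. intros H eps He; destruct (H eps He) as [A HA]; exists A; intros x Hx; apply HA; lra. Qed.

Lemma Rconverges_of_lim_minus_infty w l : lim_minus_infty w l -> Rconverges_at (-1) w l.
Proof. intros H eps He; destruct (H eps He) as [A HA]; exists (- A); intros x Hx; apply HA; lra. Qed.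

(** * Cauchy criteria from integrable derivatives *)

Lemma Rabs_diff_le_of_deriv_dominated (h r G g : R -> R) C a b :
  (forall x, derivable_pt_lim h x (r x)) -> (forall x, derivable_pt_lim G x (g x)) -> a <= b ->
  (forall c, a <= c <= b -> Rabs (r c) <= C * g c) -> Rabs (h b - h a) <= C * (G b - G a).
Proof.
  intros Hh HG Hab Hb; destruct (Rle_lt_or_eq_dec _ _ Hab) as [Hlt| <-].
  2: { replace (h a - h a) with 0 by ring; rewrite Rabs_R0; lra. }
  assert (HCG : forall x, derivable_pt_lim (fun t => C * G t) x (C * g x))
    by (intro; apply derivable_pt_lim_scal, HG).
  destruct (MVT_cor2 (fun t => C * G t - h t) (fun t => C * g t - r t) a b Hlt) as [c1 [E1 H1]].
  { intros; apply derivable_pt_lim_minus; auto. }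
  destruct (MVT_cor2 (fun t => C * G t + h t) (fun t => C * g t + r t) a b Hlt) as [c2 [E2 H2]].
  { intros; apply derivable_pt_lim_plus; auto. }
  pose proof (Hb c1 ltac:(lra)); pose proof (Hb c2 ltac:(lra)).
  pose proof (Rle_abs (r c1)); pose proof (Rle_abs (- r c1));
  pose proof (Rle_abs (r c2)); pose proof (Rle_abs (- r c2)); rewrite !Rabs_Ropp in *.
  apply Rabs_le; split; nra.
Qed.

Lemma Rcauchy_pinfty_nondecreasing_bounded (G : R -> R) B :
  (forall a b, a <= b -> G a <= G b) -> (forall x, Rabs (G x) <= B) -> Rcauchy_at 1 G.
Proof.
  intros Hmon HB eps He.
  destruct (completeness (fun y => exists x, y = G x)) as [L [Hub Hlub]].
  { exists B; intros y [x ->]; pose proof (Rle_abs (G x)); specialize (HB x); lra. }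
  { exists (G 0), 0; reflexivity. }
  assert (exists x0, L - eps < G x0) as [x0 Hx0].
  { apply NNPP; intro Hn.
    enough (L <= L - eps) by lra.
    apply Hlub; intros y [x ->]; apply Rnot_lt_le; intro; apply Hn; now exists x. }
  exists x0; intros x y Hx Hy.
  assert (G x <= L) by (apply Hub; now exists x).
  assert (G y <= L) by (apply Hub; now exists y).
  pose proof (Hmon x0 x ltac:(lra)); pose proof (Hmon x0 y ltac:(lra)).
  apply Rabs_def1; lra.
Qed.

Lemma Rcauchy_nondecreasing_bounded d (G : R -> R) B : d * d = 1 ->
  (forall a b, a <= b -> G a <= G b) -> (forall x, Rabs (G x) <= B) -> Rcauchy_at d G.
Proof.
  intros Hd Hmon HB; destruct (direction_cases d Hd) as [-> | ->].
  - exact (Rcauchy_pinfty_nondecreasing_bounded G B Hmon HB).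
  - (* reflect: [x |-> - G (- x)] is nondecreasing and Cauchy at [+oo] *)
    intros eps He.
    destruct (Rcauchy_pinfty_nondecreasing_bounded (fun x => - G (- x)) B) with eps
      as [A HA]; auto.
    + intros a b Hab; pose proof (Hmon (- b) (- a) ltac:(lra)); lra.
    + intro x; rewrite Rabs_Ropp; auto.
    + exists A; intros x y Hx Hy.
      specialize (HA (- x) (- y) ltac:(lra) ltac:(lra)).
      rewrite !Ropp_involutive in HA.
      replace (- G x - - G y) with (- (G x - G y)) in HA by ring; now rewrite Rabs_Ropp in HA.
Qed.

Lemma nondecreasing_of_deriv_nonneg (G g : R -> R) :
  (forall x, derivable_pt_lim G x (g x)) -> (forall x, 0 <= g x) ->
  forall a b, a <= b -> G a <= G b.
Proof.
  intros HG Hg a b Hab; destruct (Rle_lt_or_eq_dec _ _ Hab) as [Hlt| <-]; [|lra].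
  destruct (MVT_cor2 G g a b Hlt) as [c [E _]]; auto.
  specialize (Hg c); nra.
Qed.

Lemma cauchy_at_of_dominated_deriv d (F dF : R -> Cplx) (G g : R -> R) C : d * d = 1 ->
  (forall x, Cderiv_lim F x (dF x)) ->
  (forall x, derivable_pt_lim G x (g x)) -> (forall x, 0 <= g x) ->
  (exists B, forall x, Rabs (G x) <= B) ->
  eventually d (fun x => Cnorm (dF x) <= C * g x) -> cauchy_at d F.
Proof.
  intros Hd HF HG Hg [B HB] [A0 HA0] eps He.
  pose proof (nondecreasing_of_deriv_nonneg G g HG Hg) as Hmon.
  set (C' := Rabs C + 1).
  destruct (Rcauchy_nondecreasing_bounded d G B Hd Hmon HB (eps / (2 * C')))
    as [A1 HA1]; [unfold C'; pose proof (Rabs_pos C); apply Rdiv_lt_0_compat; lra|].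
  assert (Hincr : forall a b, a <= b -> Rmax A0 A1 < d * a -> Rmax A0 A1 < d * b ->
    Cnorm (Cadd (F b) (Copp (F a))) < eps).
  { intros a b Hab Ha Hb.
    pose proof (Rmax_l A0 A1); pose proof (Rmax_r A0 A1).
    assert (Hc : forall c, a <= c <= b -> Cnorm (dF c) <= C * g c).
    { intros c Hc; apply HA0; pose proof (beyond_between d _ a b c Hd Ha Hb Hc); lra. }
    pose proof (Rabs_diff_le_of_deriv_dominated (fun t => Cre (F t)) (fun t => Cre (dF t))
      G g C a b ltac:(intros; apply HF) HG Hab
      ltac:(intros c Hc'; eapply Rle_trans; [apply Rabs_Cre_le | auto])) as Hre.
    pose proof (Rabs_diff_le_of_deriv_dominated (fun t => Cim (F t)) (fun t => Cim (dF t))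
      G g C a b ltac:(intros; apply HF) HG Hab
      ltac:(intros c Hc'; eapply Rle_trans; [apply Rabs_Cim_le | auto])) as Him.
    specialize (HA1 a b ltac:(lra) ltac:(lra)).
    pose proof (Hmon a b Hab) as Hab'.
    rewrite Rabs_minus_sym, Rabs_right in HA1 by lra.
    assert (HC' : 0 < C') by (unfold C'; pose proof (Rabs_pos C); lra).
    assert (Hdelta : C * (G b - G a) < eps / 2).
    { apply (Rle_lt_trans _ (C' * (G b - G a))); [unfold C'; pose proof (Rle_abs C); nra|].
      apply (Rmult_lt_compat_l C') in HA1; [|exact HC'].
      replace (C' * (eps / (2 * C'))) with (eps / 2) in HA1 by (field; lra); exact HA1. }
    eapply Rle_lt_trans; [apply Cnorm_le_Rabs|]; cbv beta in Hre, Him; unfold Rminus in Hre, Him; Cunfold; lra. }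
  exists (Rmax A0 A1); intros x y Hx Hy; destruct (Rle_dec y x).
  - now apply Hincr.
  - rewrite <- Cnorm_opp.
    replace (Copp (Cadd (F x) (Copp (F y)))) with (Cadd (F y) (Copp (F x))) by Cring.
    apply Hincr; auto; lra.
Qed.

Definition solution (V : R -> Cplx) (k : R) (f df : R -> Cplx) : Prop :=
  forall x, Cderiv_lim f x (df x) /\
    Cderiv_lim df x (Cmul (Cadd (V x) (RtoC (- k ^ 2))) (f x)).

Definition behaves_like (d ka : R) (al : Cplx) (f df : R -> Cplx) : Prop :=
  vanishes_at d (fun x => Cadd (f x) (Copp (Cmul al (Cexpi (ka * x))))) /\
  vanishes_at d (fun x => Cadd (df x) (Copp (Cmul (Cmul al (0, ka)) (Cexpi (ka * x))))).

Definition free_wronskian (ka : R) (f df : R -> Cplx) (x : R) : Cplx :=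
  Cmul (Cexpi (ka * x)) (Cadd (df x) (Copp (Cmul (0, ka) (f x)))).

Lemma solution_of_solves_schrodinger V k phi :
  solves_schrodinger V k phi -> exists dphi, solution V k phi dphi.
Proof.
  intros [dphi [ddphi H]]; exists dphi; intro x; destruct (H x) as [H1 [H2 E]]; split; auto.
  apply (Cderiv_lim_eq_val _ _ _ _ H2); revert E.
  generalize (ddphi x) (V x) (phi x); intros [a b] [c e] [g h] E; Cunfold.
  injection E; intros; f_equal; lra.
Qed.

Lemma free_wronskian_deriv V k ka f df : solution V k f df -> ka * ka = k ^ 2 ->
  forall x, Cderiv_lim (free_wronskian ka f df) x (Cmul (Cexpi (ka * x)) (Cmul (V x) (f x))).
Proof.
  intros Hs Hka x; destruct (Hs x) as [H1 H2]; rewrite <- Hka in H2.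
  eapply Cderiv_lim_eq_val.
  - apply Cderiv_lim_mul; [apply Cderiv_lim_expi|].
    apply Cderiv_lim_add; [exact H2|].
    apply Cderiv_lim_opp, Cderiv_lim_mul; [apply Cderiv_lim_const | exact H1].
  - Cring.
Qed.

Lemma free_wronskian_cauchy V k ka f df d B : short_range V -> d * d = 1 ->
  ka * ka = k ^ 2 -> solution V k f df -> eventually d (fun x => Cnorm (f x) <= B) ->
  cauchy_at d (free_wronskian ka f df).
Proof.
  intros [G [HG HGB]] Hd Hka Hs HfB.
  apply (cauchy_at_of_dominated_deriv d _ _ G _ B Hd (free_wronskian_deriv V k ka f df Hs Hka) HG);
    auto.
  - intro x; pose proof (Rabs_pos x); pose proof (Cnorm_pos (V x)); nra.
  - apply (eventually_mono _ _ _ HfB); intros x Hx.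
    rewrite !Cnorm_mult, Cnorm_expi.
    pose proof (Rabs_pos x); pose proof (Cnorm_pos (V x)); pose proof (Cnorm_pos (f x)).
    assert (0 <= B * Rabs x * Cnorm (V x)) by (repeat apply Rmult_le_pos; lra).
    nra.
Qed.

(* Comparing [x] with [x + pi / (2 |ka|)], where the modulation [e^{2 i ka x}] changes sign. *)
Lemma vanishes_at_of_cauchy_modulated d ka (Z Y : R -> Cplx) c : d * d = 1 -> ka <> 0 ->
  cauchy_at d Z -> cauchy_at d Y ->
  vanishes_at d (fun x => Cadd (Z x) (Copp (Cmul (Cexpi (2 * ka * x)) (Cadd (Y x) (Copp c))))) ->
  vanishes_at d Z.
Proof.
  intros Hd Hka HZ HY HR.
  apply (vanishes_at_intro _ _ 2); [lra|]; intros eps He.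
  destruct (HZ eps He) as [A1 HA1], (HY eps He) as [A2 HA2], (HR eps He) as [A3 HA3].
  exists (Rmax (Rmax A1 A2) A3); intros x Hx.
  pose proof (Rmax_l (Rmax A1 A2) A3); pose proof (Rmax_r (Rmax A1 A2) A3).
  pose proof (Rmax_l A1 A2); pose proof (Rmax_r A1 A2).
  pose proof (Rabs_pos_lt ka Hka) as Hka'.
  set (x' := x + d * (PI / (2 * Rabs ka))).
  assert (Hx' : d * x < d * x').
  { unfold x'; rewrite Rmult_plus_distr_l, <- Rmult_assoc, Hd.
    pose proof PI_RGT_0; assert (0 < PI / (2 * Rabs ka)) by (apply Rdiv_lt_0_compat; lra); lra. }
  assert (Hflip : Cexpi (2 * ka * x') = Copp (Cexpi (2 * ka * x))).
  { rewrite <- (Cexpi_add_PI (2 * ka * x) (d * ka / Rabs ka)).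
    - f_equal; unfold x'; field; lra.
    - replace (d * ka / Rabs ka * (d * ka / Rabs ka)) with (d * d * (ka * ka) / (Rabs ka * Rabs ka))
        by (field; lra).
      rewrite Hd, <- Rabs_mult, Rabs_right by nra; field; nra. }
  set (E := Cexpi (2 * ka * x)).
  assert (Hsplit : Cmul (RtoC 2) (Z x) =
    Cadd (Cadd (Cadd (Z x) (Copp (Cmul E (Cadd (Y x) (Copp c)))))
               (Cadd (Z x') (Copp (Cmul (Cexpi (2 * ka * x')) (Cadd (Y x') (Copp c))))))
         (Cadd (Cadd (Z x) (Copp (Z x'))) (Copp (Cmul E (Cadd (Y x') (Copp (Y x))))))).
  { rewrite Hflip; Cring. }
  assert (N1 := HA3 x ltac:(lra)); assert (N2 := HA3 x' ltac:(lra)).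
  assert (N3 := HA1 x x' ltac:(lra) ltac:(lra)); assert (N4 := HA2 x' x ltac:(lra) ltac:(lra)).
  assert (H2Z : Cnorm (Cmul (RtoC 2) (Z x)) <= 4 * eps).
  { rewrite Hsplit.
    eapply Rle_trans; [apply Cnorm_triangle|].
    eapply Rle_trans; [apply Rplus_le_compat; apply Cnorm_triangle|].
    unfold E; rewrite Cnorm_opp, Cnorm_mult, Cnorm_expi; lra. }
  rewrite Cnorm_mult, Cnorm_RtoC, Rabs_right in H2Z; lra.
Qed.

Lemma free_wronskian_modulation ka (f df : R -> Cplx) x :
  Cadd (free_wronskian ka f df x)
       (Copp (Cmul (Cexpi (2 * ka * x)) (Cadd (free_wronskian (- ka) f df x) (Copp (0, 2 * ka))))) =
  Cmul (0, - 2 * ka) (Cmul (Cexpi (ka * x)) (Cadd (f x) (Copp (Cexpi (ka * x))))).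
Proof.
  unfold free_wronskian.
  replace (2 * ka * x) with (ka * x + ka * x) by ring.
  replace (- ka * x) with (- (ka * x)) by ring.
  rewrite Cexpi_add, Cexpi_opp.
  pose proof (sin2_cos2 (ka * x)); unfold Rsqr in *.
  destruct (f x) as [f1 f2], (df x) as [g1 g2]; Cunfold.
  apply injective_projections; simpl; nsatz.
Qed.

Lemma deriv_sub_free_wave ka (f df : R -> Cplx) x :
  Cadd (df x) (Copp (Cmul (0, ka) (Cexpi (ka * x)))) =
  Cadd (Cmul (Cconj (Cexpi (ka * x))) (free_wronskian ka f df x))
       (Cmul (0, ka) (Cadd (f x) (Copp (Cexpi (ka * x))))).
Proof.
  unfold free_wronskian.
  pose proof (sin2_cos2 (ka * x)); unfold Rsqr in *.
  destruct (f x) as [f1 f2], (df x) as [g1 g2]; Cunfold.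
  apply injective_projections; simpl; nsatz.
Qed.

Lemma behaves_like_of_jost V k ka d f df : short_range V -> d * d = 1 ->
  ka * ka = k ^ 2 -> ka <> 0 -> solution V k f df ->
  vanishes_at d (fun x => Cadd (f x) (Copp (Cexpi (ka * x)))) ->
  behaves_like d ka (RtoC 1) f df.
Proof.
  intros Hshort Hd Hka Hka0 Hs Hf.
  assert (HfB : eventually d (fun x => Cnorm (f x) <= 2)).
  { apply (eventually_mono _ _ _ (Hf 1 Rlt_0_1)); intros x Hx.
    pose proof (Cnorm_le_sub (f x) (Cexpi (ka * x))); rewrite Cnorm_expi in *; lra. }
  assert (HZ : vanishes_at d (free_wronskian ka f df)).
  { apply (vanishes_at_of_cauchy_modulated d ka _ (free_wronskian (- ka) f df) (0, 2 * ka) Hd Hka0).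
    - exact (free_wronskian_cauchy V k ka f df d 2 Hshort Hd Hka Hs HfB).
    - apply (free_wronskian_cauchy V k (- ka) f df d 2 Hshort Hd); auto; lra.
    - apply (vanishes_at_ext _ _ _ (fun x => eq_sym (free_wronskian_modulation ka f df x))).
      apply vanishes_at_mul_bounded; [apply bounded_at_const|].
      apply vanishes_at_mul_bounded; [apply bounded_at_expi | exact Hf]. }
  split.
  - apply (vanishes_at_ext _ (fun x => Cadd (f x) (Copp (Cexpi (ka * x))))); [intro; Cring | exact Hf].
  - apply (vanishes_at_ext _ (fun x => Cadd (df x) (Copp (Cmul (0, ka) (Cexpi (ka * x))))));
      [intro; Cring|].
    apply (vanishes_at_ext _ _ _ (fun x => eq_sym (deriv_sub_free_wave ka f df x))).
    apply vanishes_at_add.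
    + apply vanishes_at_mul_bounded; [|exact HZ].
      exists 1, 0; intros; rewrite Cnorm_conj, Cnorm_expi; lra.
    + apply vanishes_at_mul_bounded; [apply bounded_at_const | exact Hf].
Qed.

Lemma jost_behaves_like V k ka d phi : short_range V -> d * d = 1 ->
  ka * ka = k ^ 2 -> ka <> 0 -> solves_schrodinger V k phi ->
  vanishes_at d (fun x => Cadd (phi x) (Copp (Cexpi (ka * x)))) ->
  exists dphi, solution V k phi dphi /\ behaves_like d ka (RtoC 1) phi dphi.
Proof.
  intros Hshort Hd Hka Hka0 Hsol Hphi.
  destruct (solution_of_solves_schrodinger _ _ _ Hsol) as [dphi Hs].
  exists dphi; split; [exact Hs|]; now apply (behaves_like_of_jost V k).
Qed.

(** * The conjugated Darboux transform *)

(* [-f'' + V f = -(d/dx - i w)(d/dx + i w) f + k0^2 f], so [f' + i w f] solves the equation with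
   the partner potential [conj V]; complex conjugation brings it back to [V]. *)
Definition conj_darboux (w : R -> R) (f df : R -> Cplx) (x : R) : Cplx :=
  Cconj (Cadd (df x) (Cmul (0, w x) (f x))).

Definition conj_darboux_deriv (w : R -> R) (k0 k : R) (f df : R -> Cplx) (x : R) : Cplx :=
  Cconj (Cadd (Cmul (0, w x) (Cadd (df x) (Cmul (0, w x) (f x)))) (Cmul (RtoC (k0 ^ 2 - k ^ 2)) (f x))).

Lemma conj_darboux_solution w dw k0 k f df : (forall x, derivable_pt_lim w x (dw x)) ->
  solution (potV w dw k0) k f df ->
  solution (potV w dw k0) k (conj_darboux w f df) (conj_darboux_deriv w k0 k f df).
Proof.
  intros Hw Hs x; destruct (Hs x) as [H1 H2]; split.
  - eapply Cderiv_lim_eq_val.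
    + apply Cderiv_lim_conj, Cderiv_lim_add; [exact H2|].
      apply Cderiv_lim_mul; [apply Cderiv_lim_imag, Hw | exact H1].
    + unfold conj_darboux_deriv, potV; Cring.
  - eapply Cderiv_lim_eq_val.
    + apply Cderiv_lim_conj, Cderiv_lim_add.
      * apply Cderiv_lim_mul; [apply Cderiv_lim_imag, Hw|].
        apply Cderiv_lim_add; [exact H2|].
        apply Cderiv_lim_mul; [apply Cderiv_lim_imag, Hw | exact H1].
      * apply Cderiv_lim_mul; [apply Cderiv_lim_const | exact H1].
    + unfold conj_darboux, potV; Cring.
Qed.

Lemma conj_darboux_behaves_like d k ka al f df w k0 om :
  behaves_like d ka al f df -> Rconverges_at d w om ->
  (ka = k \/ ka = - k) -> (om = k0 \/ om = - k0) ->
  behaves_like d (- ka) (Cmul (0, - (ka + om)) (Cconj al))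
    (conj_darboux w f df) (conj_darboux_deriv w k0 k f df).
Proof.
  intros [Hf Hdf] Hw Hka Hom.
  pose proof (bounded_at_Rconverges d w om Hw) as Bw.
  pose proof (vanishes_at_Rconverges d w om Hw) as Vw.
  set (e := fun x => Cmul al (Cexpi (ka * x))).
  assert (Hlead : vanishes_at d (fun x =>
    Cadd (Cadd (Cadd (df x) (Copp (Cmul (Cmul al (0, ka)) (Cexpi (ka * x)))))
               (Cmul (0, w x) (Cadd (f x) (Copp (e x)))))
         (Cmul (Cmul (0, 1) (e x)) (RtoC (w x - om))))).
  { apply vanishes_at_add; [apply vanishes_at_add; [exact Hdf|]|].
    - now apply vanishes_at_mul_bounded.
    - apply vanishes_at_mul_bounded; [|exact Vw].
      apply bounded_at_mul; [apply bounded_at_const | apply bounded_at_const_expi]. }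
  split.
  - eapply vanishes_at_ext; [|exact (vanishes_at_conj _ _ Hlead)].
    intro x; unfold conj_darboux, e.
    replace (- ka * x) with (- (ka * x)) by ring; rewrite Cexpi_opp; Cring.
  - assert (Hnext : vanishes_at d (fun x => Cconj (Cadd (Cadd
        (Cmul (0, w x) (Cadd (Cadd (Cadd (df x) (Copp (Cmul (Cmul al (0, ka)) (Cexpi (ka * x)))))
                                   (Cmul (0, w x) (Cadd (f x) (Copp (e x)))))
                             (Cmul (Cmul (0, 1) (e x)) (RtoC (w x - om)))))
        (Cmul (RtoC (k0 ^ 2 - k ^ 2)) (Cadd (f x) (Copp (e x)))))
        (Cmul (Cmul (RtoC (- (ka + om))) (e x)) (RtoC (w x - om)))))).
    { apply vanishes_at_conj, vanishes_at_add; [apply vanishes_at_add|].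
      - now apply vanishes_at_mul_bounded.
      - apply vanishes_at_mul_bounded; [apply bounded_at_const | exact Hf].
      - apply vanishes_at_mul_bounded; [|exact Vw].
        apply bounded_at_mul; [apply bounded_at_const | apply bounded_at_const_expi]. }
    eapply vanishes_at_ext; [|exact Hnext].
    intro x; unfold conj_darboux_deriv, e.
    replace (- ka * x) with (- (ka * x)) by ring; rewrite Cexpi_opp.
    destruct Hka as [-> | ->], Hom as [-> | ->]; Cring.
Qed.

Definition wronskian (f df g dg : R -> Cplx) (x : R) : Cplx :=
  Cadd (Cmul (f x) (dg x)) (Copp (Cmul (df x) (g x))).

Lemma wronskian_const V k f df g dg : solution V k f df -> solution V k g dg ->
  forall x y, wronskian f df g dg x = wronskian f df g dg y.
Proof.
  intros Hf Hg; apply Cderiv_lim_zero_const; intro x.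
  destruct (Hf x) as [F1 F2], (Hg x) as [G1 G2].
  eapply Cderiv_lim_eq_val.
  - apply Cderiv_lim_add; [apply Cderiv_lim_mul; eassumption|].
    apply Cderiv_lim_opp, Cderiv_lim_mul; eassumption.
  - Cring.
Qed.

Lemma behaves_like_bounded d ka al f df : behaves_like d ka al f df -> bounded_at d f.
Proof. intros [H _]; exact (bounded_at_near _ _ _ H (bounded_at_const_expi _ _ _)). Qed.

Lemma behaves_like_bounded_deriv d ka al f df : behaves_like d ka al f df -> bounded_at d df.
Proof. intros [_ H]; exact (bounded_at_near _ _ _ H (bounded_at_const_expi _ _ _)). Qed.

Lemma wronskian_of_behaves_like V k d ka ka' al be f df g dg : d * d = 1 ->
  solution V k f df -> solution V k g dg ->
  behaves_like d ka al f df -> behaves_like d ka' be g dg -> (ka' = ka \/ ka' = - ka) ->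
  forall x, wronskian f df g dg x = Cmul (Cmul al be) (0, ka' - ka).
Proof.
  intros Hd Hsf Hsg Hf Hg Hka x.
  pose proof Hf as [F0 F1]; pose proof Hg as [G0 G1].
  set (c := Cmul (Cmul al be) (0, ka' - ka)).
  set (E := fun y => Cexpi (ka * y)); set (E' := fun y => Cexpi (ka' * y)).
  assert (Hlim : vanishes_at d (fun y => Cadd (wronskian f df g dg y) (Copp c))).
  { assert (Hsum : vanishes_at d (fun y => Cadd (Cadd (Cadd
       (Cmul (dg y) (Cadd (f y) (Copp (Cmul al (E y)))))
       (Cmul (Cmul al (E y)) (Cadd (dg y) (Copp (Cmul (Cmul be (0, ka')) (E' y))))))
       (Copp (Cmul (g y) (Cadd (df y) (Copp (Cmul (Cmul al (0, ka)) (E y)))))))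
       (Copp (Cmul (Cmul (Cmul al (0, ka)) (E y)) (Cadd (g y) (Copp (Cmul be (E' y)))))))).
    { repeat apply vanishes_at_add; try apply vanishes_at_opp; apply vanishes_at_mul_bounded;
        eauto using behaves_like_bounded, behaves_like_bounded_deriv, bounded_at_const_expi. }
    eapply vanishes_at_ext; [|exact Hsum].
    intro y; unfold wronskian, E, E', c; destruct Hka as [-> | ->]; [Cring|].
    (* for [ka' = - ka] the cross terms cancel because [|e^{i ka y}| = 1] *)
    replace (- ka * y) with (- (ka * y)) by ring; rewrite Cexpi_opp.
    pose proof (Cexpi_mul_conj (ka * y)) as EE; revert EE.
    generalize (Cexpi (ka * y)); intros [e1 e2] EE; Cunfold.
    injection EE; intros; apply injective_projections; simpl; nsatz. }
  assert (Hc : vanishes_at d (fun _ => Cadd (wronskian f df g dg x) (Copp c))).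
  { eapply vanishes_at_ext; [|exact Hlim].
    intro y; cbv beta; now rewrite (wronskian_const V k f df g dg Hsf Hsg y x). }
  apply (vanishes_at_const_eq0 d _ Hd) in Hc.
  replace (wronskian f df g dg x) with (Cadd (Cadd (wronskian f df g dg x) (Copp c)) c) by Cring.
  rewrite Hc; Cring.
Qed.

Lemma wronskian_self f df x : wronskian f df f df x = C0.
Proof. unfold wronskian; Cring. Qed.

Lemma wronskian_plucker f df g dg u du h dh x :
  Cmul (wronskian f df g dg x) (wronskian u du h dh x) =
  Cadd (Cmul (wronskian f df u du x) (wronskian g dg h dh x))
       (Cmul (wronskian f df h dh x) (wronskian u du g dg x)).
Proof. unfold wronskian; Cring. Qed.

Lemma wronskian_combination_r f df g dg h dh u du a b x :
  u x = Cadd (Cmul a (g x)) (Cmul b (h x)) ->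
  du x = Cadd (Cmul a (dg x)) (Cmul b (dh x)) ->
  wronskian f df u du x =
  Cadd (Cmul a (wronskian f df g dg x)) (Cmul b (wronskian f df h dh x)).
Proof. unfold wronskian; intros -> ->; Cring. Qed.

Lemma combination_deriv (g f1 f2 dg df1 df2 : R -> Cplx) a b x :
  (forall t, g t = Cadd (Cmul a (f1 t)) (Cmul b (f2 t))) ->
  Cderiv_lim g x (dg x) -> Cderiv_lim f1 x (df1 x) -> Cderiv_lim f2 x (df2 x) ->
  dg x = Cadd (Cmul a (df1 x)) (Cmul b (df2 x)).
Proof.
  intros E Hg H1 H2; apply (Cderiv_lim_unique g x); [exact Hg|].
  apply (Cderiv_lim_ext _ _ _ _ (fun t => eq_sym (E t))).
  eapply Cderiv_lim_eq_val.
  - apply Cderiv_lim_add; apply Cderiv_lim_mul; eauto using Cderiv_lim_const.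
  - Cring.
Qed.

Lemma conj_darboux_combination w k0 k f df g dg h dh a b x :
  f x = Cadd (Cmul a (g x)) (Cmul b (h x)) ->
  df x = Cadd (Cmul a (dg x)) (Cmul b (dh x)) ->
  conj_darboux w f df x =
    Cadd (Cmul (Cconj a) (conj_darboux w g dg x)) (Cmul (Cconj b) (conj_darboux w h dh x)) /\
  conj_darboux_deriv w k0 k f df x =
    Cadd (Cmul (Cconj a) (conj_darboux_deriv w k0 k g dg x))
         (Cmul (Cconj b) (conj_darboux_deriv w k0 k h dh x)).
Proof. unfold conj_darboux, conj_darboux_deriv; intros -> ->; split; Cring. Qed.

(** * The transfer matrix *)

Lemma transfer_matrix_jost_data V k phi1L phi2L phi1R phi2R M11 M12 M21 M22 :
  short_range V -> k <> 0 ->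
  transfer_matrix_at V k phi1L phi2L phi1R phi2R M11 M12 M21 M22 ->
  exists d1L d2L d1R d2R,
    (solution V k (phi1L k) d1L /\ behaves_like (-1) k (RtoC 1) (phi1L k) d1L) /\
    (solution V k (phi2L k) d2L /\ behaves_like (-1) (- k) (RtoC 1) (phi2L k) d2L) /\
    (solution V k (phi1R k) d1R /\ behaves_like 1 k (RtoC 1) (phi1R k) d1R) /\
    (solution V k (phi2R k) d2R /\ behaves_like 1 (- k) (RtoC 1) (phi2R k) d2R).
Proof.
  intros Hshort Hk [[S1L A1L] [[S2L A2L] [[S1R A1R] [[S2R A2R] _]]]].
  assert (Hk' : - k <> 0) by lra.
  destruct (jost_behaves_like V k k (-1) (phi1L k)) as [d1L H1L]; auto; try ring.
  { now apply vanishes_at_of_Clim_minus_infty. }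
  destruct (jost_behaves_like V k (- k) (-1) (phi2L k)) as [d2L H2L]; auto; try ring.
  { now apply vanishes_at_of_Clim_minus_infty. }
  destruct (jost_behaves_like V k k 1 (phi1R k)) as [d1R H1R]; auto; try ring.
  { now apply vanishes_at_of_Clim_plus_infty. }
  destruct (jost_behaves_like V k (- k) 1 (phi2R k)) as [d2R H2R]; auto; try ring.
  { now apply vanishes_at_of_Clim_plus_infty. }
  now exists d1L, d2L, d1R, d2R.
Qed.

Lemma jost_pair_wronskians w dw k0 k om d f1 d1 f2 d2 :
  (forall x, derivable_pt_lim w x (dw x)) -> d * d = 1 ->
  Rconverges_at d w om -> (om = k0 \/ om = - k0) ->
  solution (potV w dw k0) k f1 d1 -> behaves_like d k (RtoC 1) f1 d1 ->
  solution (potV w dw k0) k f2 d2 -> behaves_like d (- k) (RtoC 1) f2 d2 ->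
  forall x,
    wronskian f1 d1 f2 d2 x = (0, - 2 * k) /\
    wronskian f1 d1 (conj_darboux w f1 d1) (conj_darboux_deriv w k0 k f1 d1) x =
      RtoC (- 2 * k * (k + om)) /\
    wronskian f2 d2 (conj_darboux w f1 d1) (conj_darboux_deriv w k0 k f1 d1) x = C0 /\
    wronskian f1 d1 (conj_darboux w f2 d2) (conj_darboux_deriv w k0 k f2 d2) x = C0.
Proof.
  intros Hw Hd Hconv Hom s1 a1 s2 a2 x.
  pose proof (conj_darboux_solution w dw k0 k f1 d1 Hw s1) as sT1.
  pose proof (conj_darboux_solution w dw k0 k f2 d2 Hw s2) as sT2.
  pose proof (conj_darboux_behaves_like d k k _ f1 d1 w k0 om a1 Hconv
    ltac:(now left) Hom) as aT1.
  pose proof (conj_darboux_behaves_like d k (- k) _ f2 d2 w k0 om a2 Hconv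
    ltac:(now right) Hom) as aT2.
  repeat split;
    (erewrite wronskian_of_behaves_like; [| eassumption ..| first [left; ring | right; ring]]);
    Cring.
Qed.

Lemma transfer_matrix_conj_identity w dw k0 k (Hw : forall x, derivable_pt_lim w x (dw x))
  (Hlimm : lim_minus_infty w k0) (Hlimp : lim_plus_infty w (- k0))
  (Hshort : short_range (potV w dw k0))
  (phi1L phi2L phi1R phi2R : R -> R -> Cplx) (M11 M12 M21 M22 : R -> Cplx) (Hk : k <> 0)
  (HM : transfer_matrix_at (potV w dw k0) k phi1L phi2L phi1R phi2R M11 M12 M21 M22) :
  Cmul (RtoC (k + k0)) (M22 k) = Cmul (RtoC (k - k0)) (Cconj (M11 k)).
Proof.
  destruct (transfer_matrix_jost_data _ k _ _ _ _ _ _ _ _ Hshort Hk HM)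
    as (d1L & d2L & d1R & d2R & [s1L a1L] & [s2L a2L] & [s1R a1R] & [s2R a2R]).
  destruct HM as (_ & _ & _ & _ & D1 & D2).
  destruct (jost_pair_wronskians w dw k0 k k0 (-1) _ _ _ _ Hw ltac:(ring)
    (Rconverges_of_lim_minus_infty _ _ Hlimm) ltac:(now left) s1L a1L s2L a2L 0)
    as (W_L & W_f1L_T1L & W_f2L_T1L & _).
  destruct (jost_pair_wronskians w dw k0 k (- k0) 1 _ _ _ _ Hw ltac:(ring)
    (Rconverges_of_lim_plus_infty _ _ Hlimp) ltac:(now right) s1R a1R s2R a2R 0)
    as (W_R & W_f1R_T1R & _ & W_f1R_T2R).
  assert (Dd1 := combination_deriv _ _ _ _ _ _ _ _ 0 D1 (proj1 (s1L 0)) (proj1 (s1R 0)) (proj1 (s2R 0))).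
  assert (Dd2 := combination_deriv _ _ _ _ _ _ _ _ 0 D2 (proj1 (s2L 0)) (proj1 (s1R 0)) (proj1 (s2R 0))).
  destruct (conj_darboux_combination w k0 k _ _ _ _ _ _ _ _ 0 (D1 0) Dd1) as [HT HdT].
  assert (Hright := wronskian_combination_r (phi1R k) d1R _ _ _ _ _ _ _ _ 0 HT HdT).
  assert (Hf2L := wronskian_combination_r (phi1R k) d1R _ _ _ _ _ _ _ _ 0 (D2 0) Dd2).
  rewrite wronskian_self in Hf2L.
  pose proof (wronskian_plucker (phi1L k) d1L (phi2L k) d2L (phi1R k) d1R
    (conj_darboux w (phi1L k) d1L) (conj_darboux_deriv w k0 k (phi1L k) d1L) 0) as Hpl.
  rewrite Hright, Hf2L, W_L, W_R, W_f2L_T1L, W_f1L_T1L, W_f1R_T1R, W_f1R_T2R in Hpl.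
  apply (Cmul_reg_l (RtoC (4 * k * k))); [Cunfold; intro E; injection E; nra|].
  revert Hpl; generalize (M22 k) (M11 k) (M21 k) (wronskian (phi1L k) d1L (phi1R k) d1R 0).
  intros [a b] [c e] [g h] [p q] E; Cunfold; injection E; intros E1 E2.
  apply injective_projections; simpl; nra.
Qed.

Theorem mainTheorem6
  (w dw : R -> R) (k0 : R)
  (Hk0 : 0 < k0)
  (Hw : forall x, derivable_pt_lim w x (dw x))
  (Hdw : continuity dw)
  (Hlimm : lim_minus_infty w k0)
  (Hlimp : lim_plus_infty w (- k0))
  (Hshort : short_range (potV w dw k0))
  (phi1L phi2L phi1R phi2R : R -> R -> Cplx)
  (M11 M12 M21 M22 : R -> Cplx)
  (HM : forall k, k <> 0 ->
     transfer_matrix_at (potV w dw k0) k phi1L phi2L phi1R phi2R M11 M12 M21 M22)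
  (HM11 : exists d11 : Cplx, Cderiv_lim M11 k0 d11)
  (d22 : Cplx) (HM22 : Cderiv_lim M22 k0 d22) :
  M11 k0 = Cmul (RtoC (2 * k0)) (Cconj d22) /\
  (M11 k0 = C0 <-> d22 = C0) /\
  (M11 k0 = C0 <-> (M22 k0 = C0 /\ d22 = C0)).
Proof.
  destruct HM11 as [d11 HM11].
  assert (Hfactor : forall t, k0 - k0 < t < k0 + k0 ->
    M22 t = Cmul (RtoC ((t - k0) / (t + k0))) (Cconj (M11 t))).
  { intros t Ht; apply (Cmul_reg_l (RtoC (t + k0))); [Cunfold; intro E; injection E; lra|].
    rewrite (transfer_matrix_conj_identity w dw k0 t Hw Hlimm Hlimp Hshort
      phi1L phi2L phi1R phi2R M11 M12 M21 M22 ltac:(lra) (HM t ltac:(lra))).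
    Cfield; lra. }
  assert (Hd22 : d22 = Cmul (RtoC (/ (2 * k0))) (Cconj (M11 k0))).
  { apply (Cderiv_lim_unique M22 k0 _ _ HM22).
    apply (Cderiv_lim_vanishing_factor _ (fun t => Cconj (M11 t)) _ _ _ (Cconj d11) k0 Hk0 Hfactor).
    - field; lra.
    - apply derivable_pt_lim_cayley; lra.
    - now apply Cderiv_lim_conj. }
  assert (H22 : M22 k0 = C0) by (rewrite Hfactor by lra; Cfield; lra).
  assert (H11 : M11 k0 = Cmul (RtoC (2 * k0)) (Cconj d22)) by (rewrite Hd22; Cfield; lra).
  assert (Hiff : M11 k0 = C0 <-> d22 = C0).
  { split; intro E; [rewrite Hd22, E | rewrite H11, E]; Cring. }
  rewrite H22; tauto.
Qed.
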